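(* Let $\ket\psi$ be an $n$-qubit pure state and let $T\subseteq\mathbb F_2^{2n}$ be a subspace. Then \[\frac{1}{|T|}\sum_{a\in T}q_\psi(a) = \sum_{x\in T^\perp}p_\psi(x)^2.\]
   Context: For $x=(a,b)\in\mathbb F_2^{2n}$, $W_x = i^{a\cdot b}X^{a_1}Z^{b_1}\otimes\cdots\otimes X^{a_n}Z^{b_n}$ ($a\cdot b$ over the integers), $p_\psi(x)=2^{-n}\braket{\psi|W_x|\psi}^2$, and $q_\psi(x)=\sum_{y\in\mathbb F_2^{2n}}p_\psi(y)p_\psi(x+y)$. The symplectic product is $[x,y]=\sum_{j=1}^n(x_jy_{n+j}+x_{n+j}y_j)\bmod 2$, and $T^\perp=\{a:[x,a]=0\ \forall x\in T\}$. *)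

From HB Require Import structures.
From mathcomp Require Import all_boot all_order all_algebra all_field.
From mathcomp Require Import mxtens.
Set Implicit Arguments. Unset Strict Implicit. Unset Printing Implicit Defensive.
Import Order.TTheory GRing.Theory Num.Theory.
Local Open Scope ring_scope.

Section Pauli.
(* C plays the role of the complex numbers (any numeric algebraically
   closed field, e.g. algC or complex R). *)
Variable C : numClosedFieldType.

Definition pauliX : 'M[C]_2 := \matrix_(i, j) (i != j)%:R.
Definition pauliZ : 'M[C]_2 := \matrix_(i, j) ((i == j)%:R * (-1) ^+ (nat_of_ord i)).

Fixpoint ktens (n : nat) : ('I_n -> 'M[C]_2) -> 'M[C]_(2 ^ n) :=
  match n return ('I_n -> 'M[C]_2) -> 'M[C]_(2 ^ n) with
  | 0 => fun _ => 1%:M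
  | k.+1 => fun F =>
      castmx (esym (expnS 2 k), esym (expnS 2 k))
             (F ord0 *t ktens (fun j => F (lift ord0 j)))
  end.

(* x = (a,b) in F_2^{2n}: a_j = x_(j), b_j = x_(n+j) *)
Definition xa (n : nat) (x : 'rV['F_2]_(n + n)) (j : 'I_n) : 'F_2 := x 0 (lshift n j).
Definition xb (n : nat) (x : 'rV['F_2]_(n + n)) (j : 'I_n) : 'F_2 := x 0 (rshift n j).

Definition adotb (n : nat) (x : 'rV['F_2]_(n + n)) : nat :=
  (\sum_(j < n) ((xa x j == 1%R) && (xb x j == 1%R)))%N.

Definition W (n : nat) (x : 'rV['F_2]_(n + n)) : 'M[C]_(2 ^ n) :=
  'i ^+ adotb x *:
    ktens (fun j => (if xa x j == 1 then pauliX else 1) *m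
                    (if xb x j == 1 then pauliZ else 1)).

Definition bra (n : nat) (psi : 'cV[C]_(2 ^ n)) : 'rV[C]_(2 ^ n) :=
  (map_mx Num.conj psi)^T.

Definition pure_state (n : nat) (psi : 'cV[C]_(2 ^ n)) : Prop :=
  (bra psi *m psi) 0 0 = 1.

Definition p_psi (n : nat) (psi : 'cV[C]_(2 ^ n)) (x : 'rV['F_2]_(n + n)) : C :=
  (2 ^+ n)^-1 * ((bra psi *m W x *m psi) 0 0) ^+ 2.

Definition q_psi (n : nat) (psi : 'cV[C]_(2 ^ n)) (x : 'rV['F_2]_(n + n)) : C :=
  \sum_(y : 'rV['F_2]_(n + n)) p_psi psi y * p_psi psi (x + y).

End Pauli.

Definition sympl (n : nat) (x y : 'rV['F_2]_(n + n)) : 'F_2 :=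
  \sum_(j < n) (xa x j * xb y j + xb x j * xa y j).

Definition sperp (n : nat) (T : {vspace 'rV['F_2]_(n + n)}) : pred 'rV['F_2]_(n + n) :=
  [pred a | [forall x, (x \in T) ==> (sympl x a == 0)]].

From HB Require Import structures.
From mathcomp Require Import all_boot all_order all_algebra all_field.
From mathcomp Require Import mxtens ring.
Import Order.TTheory GRing.Theory Num.Theory.
Set Implicit Arguments. Unset Strict Implicit. Unset Printing Implicit Defensive.
Local Open Scope ring_scope.

(* The Pauli operators satisfy W_a W_x W_a = (-1)^[a,x] W_x and form a complete
   family: sum_x W_x M W_x = 2^n tr(M) I.  Together these make p_psi an
   eigenfunction of the symplectic Fourier transform,
   sum_x (-1)^[a,x] p(x) = 2^n p(a).  As q_psi = p * p is a convolution, its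
   transform is the square of that of p, whence q(a) = sum_x (-1)^[a,x] p(x)^2.
   Finally, averaging the character a |-> (-1)^[a,x] over the subspace T gives
   the indicator function of T^perp. *)

Lemma F2_cases (t : 'F_2) : t = 0 \/ t = 1.
Proof. by case: t => [[|[|]]] //= ?; [left | right]; apply: val_inj. Qed.

Lemma rowF2_addrr m (x : 'rV['F_2]_m) : x + x = 0.
Proof. by apply/matrixP => i j; rewrite !mxE addrr_pchar2 // pchar_Fp. Qed.

Lemma rowF2_addr_eq0 m (x y : 'rV['F_2]_m) : (x + y == 0) = (x == y).
Proof. by rewrite addr_eq0 -[- y]add0r -(rowF2_addrr y) addrK. Qed.

Lemma sumF2 (V : nmodType) (F : 'F_2 -> V) : \sum_t F t = F 0 + F 1.
Proof.
change (\sum_(t : 'I_2) F t = F 0 + F 1).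
by rewrite !big_ord_recl big_ord0 addr0; congr (F _ + F _); apply: val_inj.
Qed.

Lemma sumF2xF2 (V : nmodType) (F : 'F_2 * 'F_2 -> V) :
  \sum_s F s = F (0, 0) + F (0, 1) + F (1, 0) + F (1, 1).
Proof.
rewrite (eq_bigr (fun s => F (s.1, s.2))) => [|[] //].
rewrite -(pair_bigA _ (fun a b => F (a, b))) /=.
by rewrite (eq_bigr _ (fun a _ => sumF2 (fun b => F (a, b)))) sumF2 !addrA.
Qed.

Lemma ffun_ord0_lift_bij (T : finType) n :
  bijective (fun f : {ffun 'I_n.+1 -> T} => (f ord0, [ffun j => f (lift ord0 j)])).
Proof.
exists (fun p : T * {ffun 'I_n -> T} =>
  [ffun i => if unlift ord0 i is Some j then p.2 j else p.1] : {ffun 'I_n.+1 -> T}).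
  move=> f; apply/ffunP => i; rewrite ffunE.
  by case: unliftP => [j -> | ->] /=; rewrite ?ffunE.
move=> [t g] /=; rewrite ffunE unlift_none; congr (_, _).
by apply/ffunP => j; rewrite !ffunE liftK.
Qed.

Lemma rowF2_ffun_bij n :
  bijective (fun x : 'rV['F_2]_(n + n) => [ffun j => (xa x j, xb x j)]).
Proof.
exists (fun f : {ffun 'I_n -> 'F_2 * 'F_2} => row_mx (\row_j (f j).1) (\row_j (f j).2)).
  move=> x; apply/rowP => k; rewrite -(splitK k).
  by case: (split k) => j /=; rewrite ?row_mxEl ?row_mxEr mxE ffunE.
move=> f; apply/ffunP => j.
by rewrite !ffunE /xa /xb row_mxEl row_mxEr !mxE; case: (f j).
Qed.

Lemma sum_mul_delta (R : pzSemiRingType) (I : finType) (k : I) (F : I -> R) :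
  \sum_j F j * (j == k)%:R = F k.
Proof. by rewrite (bigD1 k) //= eqxx mulr1 big1 ?addr0 // => j /negbTE ->; rewrite mulr0. Qed.

Lemma sum_antishift_eq0 (R : numDomainType) (V : finZmodType) (A : {pred V})
    (F : V -> R) (y : V) :
  (forall a, (a + y \in A) = (a \in A)) -> (forall a, F (a + y) = - F a) ->
  \sum_(a in A) F a = 0.
Proof.
move=> Ay Fy.
have shift_bij : bijective (+%R^~ y) by exists (+%R^~ (- y)); [exact: addrK | exact: subrK].
have : \sum_(a in A) F a = - \sum_(a in A) F a.
  rewrite -sumrN (reindex _ (onW_bij _ shift_bij)) /=.
  by apply: eq_big => [a | a _]; rewrite ?Ay ?Fy.
by move/eqP; rewrite -subr_eq0 opprK -mulr2n mulrn_eq0 => /eqP.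
Qed.

Section SignCharacter.
Variable R : pzRingType.

Definition sgnF2 (t : 'F_2) : R := if t == 0 then 1 else -1.

Lemma sgnF2_0 : sgnF2 0 = 1.
Proof. by rewrite /sgnF2 eqxx. Qed.

Lemma sgnF2D s t : sgnF2 (s + t) = sgnF2 s * sgnF2 t.
Proof.
by case: (F2_cases s) => ->; case: (F2_cases t) => ->;
  rewrite /sgnF2 /= ?mulr1 ?mul1r ?mulrNN ?mulr1.
Qed.

Lemma sgnF2_sum (I : finType) (F : I -> 'F_2) :
  sgnF2 (\sum_i F i) = \prod_i sgnF2 (F i).
Proof. exact: (big_morph _ sgnF2D sgnF2_0). Qed.

End SignCharacter.

Section Symplectic.
Variable n : nat.
Implicit Types a b x y : 'rV['F_2]_(n + n).

Lemma symplC a x : sympl a x = sympl x a.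
Proof. by apply: eq_bigr => j _; ring. Qed.

Lemma symplDl a b x : sympl (a + b) x = sympl a x + sympl b x.
Proof.
rewrite /sympl -big_split /=; apply: eq_bigr => j _.
by rewrite /xa /xb !mxE; ring.
Qed.

Lemma symplDr a b x : sympl x (a + b) = sympl x a + sympl x b.
Proof. by rewrite !(symplC x) symplDl. Qed.

Lemma sympl_deltal j x : sympl (delta_mx 0 (lshift n j)) x = xb x j.
Proof.
rewrite /sympl (bigD1 j) //= big1 => [|k /negbTE kj];
  rewrite /xa /xb !mxE ?eqxx ?eq_lshift ?kj eq_rlshift ?mul1r ?mul0r ?addr0 //.
Qed.

Lemma sympl_deltar j x : sympl (delta_mx 0 (rshift n j)) x = xa x j.
Proof.
rewrite /sympl (bigD1 j) //= big1 => [|k /negbTE kj];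
  rewrite /xa /xb !mxE ?eqxx ?eq_rshift ?kj eq_lrshift ?mul1r ?mul0r ?add0r ?addr0 //.
Qed.

Lemma sperp_fullv x : (x \in sperp fullv) = (x == 0).
Proof.
apply/forallP/eqP => [x_perp | -> y]; last first.
  rewrite /sympl big1 ?eqxx ?implybT // => j _.
  by rewrite /xa /xb !mxE !mulr0 addr0.
apply/rowP => k; rewrite mxE -(splitK k); case: (split k) => j /=.
  by have /implyP/(_ (memvf _))/eqP := x_perp (delta_mx 0 (rshift n j)); rewrite sympl_deltar.
by have /implyP/(_ (memvf _))/eqP := x_perp (delta_mx 0 (lshift n j)); rewrite sympl_deltal.
Qed.

Lemma card_fullv : #|(fullv : {vspace 'rV['F_2]_(n + n)})| = (2 ^ (n + n))%N.
Proof.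
rewrite (eq_card (B := predT)) => [|a]; last by rewrite memvf.
by rewrite cardT -cardE card_mx card_Fp // mul1n.
Qed.

End Symplectic.

Section SymplecticCharacter.
Variables (R : pzRingType) (n : nat).
Implicit Types a b x : 'rV['F_2]_(n + n).

Definition symp_char a x : R := sgnF2 R (sympl a x).

Lemma symp_charDl a b x : symp_char (a + b) x = symp_char a x * symp_char b x.
Proof. by rewrite /symp_char symplDl sgnF2D. Qed.

Lemma symp_charDr a b x : symp_char x (a + b) = symp_char x a * symp_char x b.
Proof. by rewrite /symp_char symplDr sgnF2D. Qed.

End SymplecticCharacter.

Section CharacterSums.
Variables (R : numDomainType) (n : nat).
Implicit Types a x z : 'rV['F_2]_(n + n).

Lemma sum_symp_char_vspace (T : {vspace 'rV['F_2]_(n + n)}) x :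
  \sum_(a in T) symp_char R a x = (x \in sperp T)%:R * #|T|%:R.
Proof.
have [x_perp | /forallPn[a0]] := boolP (x \in sperp T).
  rewrite mul1r -sumr_const; apply: eq_bigr => a aT.
  by move/forallP/(_ a)/implyP/(_ aT)/eqP: x_perp; rewrite /symp_char => ->; rewrite sgnF2_0.
rewrite negb_imply => /andP[a0T a0x]; rewrite mul0r.
apply: (@sum_antishift_eq0 _ _ _ _ a0) => [a | a]; first exact: rpredDr.
rewrite symp_charDl /symp_char /sgnF2.
by case: (F2_cases (sympl a0 x)) a0x => -> //; rewrite mulrN1.
Qed.

Lemma sum_symp_char_mul x z :
  \sum_a symp_char R a x * symp_char R a z = (x == z)%:R * (2 ^ (n + n))%:R.
Proof.
under eq_bigr do rewrite -symp_charDr.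
rewrite -rowF2_addr_eq0 -sperp_fullv -card_fullv -sum_symp_char_vspace.
by apply: eq_bigl => a; rewrite memvf.
Qed.

Lemma sum_symp_char_conv (f g : 'rV['F_2]_(n + n) -> R) a :
  \sum_y (\sum_x symp_char R y x * f x) * (\sum_z symp_char R (a + y) z * g z) =
    (2 ^ (n + n))%:R * \sum_x f x * g x * symp_char R a x.
Proof.
under eq_bigr do rewrite big_distrlr /=.
rewrite exchange_big; under eq_bigr do rewrite exchange_big /=.
have reorder x y z : symp_char R y x * f x * (symp_char R (a + y) z * g z) =
    f x * g z * symp_char R a z * (symp_char R y x * symp_char R y z).
  by rewrite symp_charDl; ring.
under eq_bigr do under eq_bigr do
  rewrite (eq_bigr _ (fun y _ => reorder _ y _)) -mulr_sumr sum_symp_char_mul.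
rewrite mulr_sumr; apply: eq_bigr => x _.
under eq_bigr do rewrite eq_sym mulrCA mulrC.
by rewrite sum_mul_delta mulrC.
Qed.

End CharacterSums.

Lemma castmx_mulmx (R : pzRingType) m n p m' n' p'
    (em : m = m') (en : n = n') (ep : p = p') (A : 'M[R]_(m, n)) (B : 'M[R]_(n, p)) :
  castmx (em, en) A *m castmx (en, ep) B = castmx (em, ep) (A *m B).
Proof. by case: m' / em; case: n' / en; case: p' / ep; rewrite !castmx_id. Qed.

Lemma castmxZ (R : pzRingType) m n m' n' (e : (m = m') * (n = n')) c (A : 'M[R]_(m, n)) :
  castmx e (c *: A) = c *: castmx e A.
Proof. by apply/matrixP => i j; rewrite castmxE !mxE castmxE. Qed.

Lemma tensmxZl (R : comPzRingType) m n p q c (A : 'M[R]_(m, n)) (B : 'M[R]_(p, q)) :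
  (c *: A) *t B = c *: (A *t B).
Proof. by apply/matrixP => i j; rewrite !mxE mulrA. Qed.

Lemma tensmxZr (R : comPzRingType) m n p q c (A : 'M[R]_(m, n)) (B : 'M[R]_(p, q)) :
  A *t (c *: B) = c *: (A *t B).
Proof. by apply/matrixP => i j; rewrite !mxE mulrCA. Qed.

Section CompleteFamily.
Variable R : comPzRingType.

Definition complete_family (I : finType) m (A : I -> 'M[R]_m) (c : R) :=
  forall i j k l, \sum_s A s i j * A s k l = c * (i == l)%:R * (j == k)%:R.

Lemma eq_complete_family (I : finType) m (A B : I -> 'M[R]_m) c :
  A =1 B -> complete_family A c -> complete_family B c.
Proof. by move=> eqAB cA i j k l; rewrite -cA; apply: eq_bigr => s _; rewrite eqAB. Qed.

Lemma complete_family_reindex (I J : finType) m (A : I -> 'M[R]_m) c (h : J -> I) :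
  bijective h -> complete_family A c -> complete_family (fun s => A (h s)) c.
Proof. by move=> h_bij cA i j k l; rewrite -cA (reindex _ (onW_bij _ h_bij)). Qed.

Lemma complete_family_cast (I : finType) m m' (e : m = m') (A : I -> 'M[R]_m) c :
  complete_family A c -> complete_family (fun s => castmx (e, e) (A s)) c.
Proof. by case: m' / e => cA i j k l; rewrite -cA; under eq_bigr do rewrite castmx_id. Qed.

Lemma complete_family_tens (I J : finType) m p (A : I -> 'M[R]_m) (B : J -> 'M[R]_p) a b :
  complete_family A a -> complete_family B b ->
  complete_family (fun st : I * J => A st.1 *t B st.2) (a * b).
Proof.
move=> cA cB i j k l.
case: (mxtens_indexP i) => i1 i2; case: (mxtens_indexP j) => j1 j2.
case: (mxtens_indexP k) => k1 k2; case: (mxtens_indexP l) => l1 l2.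
rewrite -(pair_bigA _ (fun s t => (A s *t B t) _ _ * (A s *t B t) _ _)) /=.
under eq_bigr do under eq_bigr do rewrite !tensmxE mulrACA.
under eq_bigr do rewrite -mulr_sumr.
rewrite -mulr_suml cA cB.
rewrite !(inj_eq (can_inj (@mxtens_indexK _ _))) !xpair_eqE -!mulnb !natrM /=.
ring.
Qed.

Lemma complete_family_twirl (I : finType) m (A : I -> 'M[R]_m) c (M : 'M[R]_m) :
  complete_family A c -> \sum_s A s *m M *m A s = (c * \tr M)%:M.
Proof.
move=> cA; apply/matrixP => i l; rewrite summxE !mxE.
under eq_bigr do rewrite mxE; under eq_bigr do under eq_bigr do rewrite mxE mulr_suml.
rewrite exchange_big; under eq_bigr do rewrite exchange_big.
have reorder s j k : A s i j * M j k * A s k l = M j k * (A s i j * A s k l) by ring.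
under eq_bigr do under eq_bigr do
  rewrite (eq_bigr _ (fun s _ => reorder s _ _)) -mulr_sumr cA mulrA.
under eq_bigr do rewrite sum_mul_delta.
by rewrite -mulr_suml -[RHS]mulr_natr /mxtrace; ring.
Qed.

Lemma complete_family_bilinear (I : finType) m (A : I -> 'M[R]_m) c
    (u1 u2 : 'rV[R]_m) (v1 v2 : 'cV[R]_m) :
  complete_family A c ->
  \sum_s (u1 *m A s *m v1) 0 0 * (u2 *m A s *m v2) 0 0 =
    c * (u1 *m v2) 0 0 * (u2 *m v1) 0 0.
Proof.
move=> cA.
have entry_mul s : (u1 *m A s *m v1) 0 0 * (u2 *m A s *m v2) 0 0 =
    (u1 *m (A s *m (v1 *m u2) *m A s) *m v2) 0 0.
  rewrite !mulmxA [in RHS](mx11_scalar (u1 *m A s *m v1)) mul_scalar_mx.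
  by rewrite -!scalemxAl [RHS]mxE.
under eq_bigr do rewrite entry_mul.
rewrite -summxE -mulmx_suml -mulmx_sumr (complete_family_twirl _ cA).
by rewrite mul_mx_scalar -scalemxAl mxE mxtrace_mulC trace_mx11 mulrAC.
Qed.

End CompleteFamily.

Section SingleQubitPauli.
Variable C : numClosedFieldType.
Implicit Types s t : 'F_2 * 'F_2.

Definition pauli_XZ s : 'M[C]_2 :=
  (if s.1 == 1 then pauliX C else 1) *m (if s.2 == 1 then pauliZ C else 1).

Definition pauli_phase s : nat := (s.1 == 1) && (s.2 == 1).

Definition pauli1 s : 'M[C]_2 := 'i ^+ pauli_phase s *: pauli_XZ s.

Lemma sqr_pauli_phase s : ('i ^+ pauli_phase s) ^+ 2 = (-1) ^+ pauli_phase s :> C.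
Proof. by rewrite -exprM mulnC exprM sqrCi. Qed.

Lemma pauli_XZ_conj s t :
  pauli_XZ s *m pauli_XZ t *m pauli_XZ s =
    ((-1) ^+ pauli_phase s * sgnF2 C (s.1 * t.2 + s.2 * t.1)) *: pauli_XZ t.
Proof.
case: s t => [s1 s2] [t1 t2] /=.
case: (F2_cases s1) => ->; case: (F2_cases s2) => ->;
case: (F2_cases t1) => ->; case: (F2_cases t2) => ->;
apply/matrixP => i j; rewrite /pauli_XZ /pauli_phase /pauliX /pauliZ /sgnF2 /=.
all: do 4 rewrite ?mxE ?big_ord_recl ?big_ord0.
all: case: i => [[|[|//]]] ?; case: j => [[|[|//]]] ? /=.
all: rewrite /bump /=; ring.
Qed.

Lemma pauli1_conj s t :
  pauli1 s *m pauli1 t *m pauli1 s = sgnF2 C (s.1 * t.2 + s.2 * t.1) *: pauli1 t.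
Proof.
rewrite /pauli1 -!scalemxAl -!scalemxAr !scalerA -scalemxAl pauli_XZ_conj !scalerA.
by congr (_ *: _); rewrite mulrAC -expr2 sqr_pauli_phase signrMK.
Qed.

Lemma pauli_XZ_complete i j k l :
  \sum_s (-1) ^+ pauli_phase s * (pauli_XZ s i j * pauli_XZ s k l) =
    2 * (i == l)%:R * (j == k)%:R.
Proof.
rewrite sumF2xF2 /pauli_phase /pauli_XZ /pauliX /pauliZ /=.
do 3 rewrite ?mxE ?big_ord_recl ?big_ord0.
case: i => [[|[|//]]] ?; case: j => [[|[|//]]] ?;
case: k => [[|[|//]]] ?; case: l => [[|[|//]]] ? /=.
all: rewrite /bump /= ?expr0 ?expr1; ring.
Qed.

Lemma pauli1_complete : complete_family pauli1 2.
Proof.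
move=> i j k l; rewrite -pauli_XZ_complete; apply: eq_bigr => s _.
by rewrite !mxE mulrACA -expr2 sqr_pauli_phase.
Qed.

End SingleQubitPauli.

Section PauliOperators.
Variable C : numClosedFieldType.

Lemma eq_ktens n (F G : 'I_n -> 'M[C]_2) : F =1 G -> ktens F = ktens G.
Proof.
elim: n F G => [|n IHn] F G eqFG //=.
by rewrite eqFG (IHn _ (fun j => G (lift ord0 j))).
Qed.

Lemma ktens_mul n (F G : 'I_n -> 'M[C]_2) :
  ktens F *m ktens G = ktens (fun j => F j *m G j).
Proof.
elim: n F G => [|n IHn] F G /=; first by rewrite mulmx1.
by rewrite castmx_mulmx tensmx_mul IHn.
Qed.

Lemma ktensZ n (c : 'I_n -> C) (F : 'I_n -> 'M[C]_2) :
  ktens (fun j => c j *: F j) = (\prod_j c j) *: ktens F.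
Proof.
elim: n c F => [|n IHn] c F /=; first by rewrite big_ord0 scale1r.
by rewrite IHn tensmxZl tensmxZr scalerA big_ord_recl castmxZ mulrC.
Qed.

Lemma W_ktens n (x : 'rV['F_2]_(n + n)) :
  W C x = ktens (fun j => pauli1 C (xa x j, xb x j)).
Proof. by rewrite ktensZ prodrXr. Qed.

Lemma W_conj n (a x : 'rV['F_2]_(n + n)) :
  W C a *m W C x *m W C a = symp_char C a x *: W C x.
Proof.
rewrite !W_ktens !ktens_mul (eq_ktens (fun j => pauli1_conj _ _ _)) ktensZ.
by rewrite /symp_char sgnF2_sum.
Qed.

Lemma ktens_pauli_complete n :
  complete_family (fun f : {ffun 'I_n -> 'F_2 * 'F_2} => ktens (fun j => pauli1 C (f j)))
    (2 ^+ n).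
Proof.
elim: n => [|n IHn].
  move=> i j k l; rewrite !ord1 /= !mxE sumr_const card_ffun !card_ord /= expn0.
  by rewrite !mulr1n !mulr1.
have := complete_family_tens (pauli1_complete C) IHn.
move/(complete_family_cast (esym (expnS 2 n))).
move/(complete_family_reindex (ffun_ord0_lift_bij _ _)).
rewrite -exprS; apply: eq_complete_family => f /=.
by congr castmx; congr (_ *t _); apply: eq_ktens => j; rewrite ffunE.
Qed.

Lemma W_complete n : complete_family (@W C n) (2 ^+ n).
Proof.
have := complete_family_reindex (rowF2_ffun_bij n) (@ktens_pauli_complete n).
by apply: eq_complete_family => x; rewrite W_ktens; apply: eq_ktens => j; rewrite ffunE.
Qed.

End PauliOperators.

Section PauliFourier.
Variables (C : numClosedFieldType) (n : nat) (psi : 'cV[C]_(2 ^ n)).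

Lemma p_psi_fourier a :
  \sum_x symp_char C a x * p_psi psi x = 2 ^+ n * p_psi psi a.
Proof.
pose u := bra psi.
have conj x : symp_char C a x * (u *m W C x *m psi) 0 0 =
    (u *m W C a *m W C x *m (W C a *m psi)) 0 0.
  have -> : u *m W C a *m W C x *m (W C a *m psi) = u *m (W C a *m W C x *m W C a) *m psi.
    by rewrite !mulmxA.
  by rewrite W_conj -[in RHS]scalemxAr -[in RHS]scalemxAl [RHS]mxE.
have twisted x : symp_char C a x * p_psi psi x = (2 ^+ n)^-1 *
    ((u *m W C x *m psi) 0 0 * (u *m W C a *m W C x *m (W C a *m psi)) 0 0).
  by rewrite /p_psi -/u -conj; ring.
rewrite (eq_bigr _ (fun x _ => twisted x)) -mulr_sumr.
rewrite (complete_family_bilinear _ _ _ _ (@W_complete C n)) !mulmxA.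
have N_neq0 : (2 ^+ n : C) != 0 by rewrite expf_neq0 ?pnatr_eq0.
by rewrite /p_psi; field.
Qed.

Lemma q_psi_fourier a :
  q_psi psi a = \sum_x p_psi psi x ^+ 2 * symp_char C a x.
Proof.
have N_neq0 : (2 ^+ n : C) != 0 by rewrite expf_neq0 ?pnatr_eq0.
have inverse_fourier y :
    p_psi psi y = (2 ^+ n)^-1 * \sum_x symp_char C y x * p_psi psi x.
  by rewrite p_psi_fourier mulKf.
rewrite /q_psi.
under eq_bigr => y _ do rewrite (inverse_fourier y) (inverse_fourier (a + y)) mulrACA.
rewrite -mulr_sumr sum_symp_char_conv natrX exprD.
under [RHS]eq_bigr do rewrite expr2.
by field.
Qed.

End PauliFourier.

Unset Implicit Arguments.

Theorem theorem3p2 (C : numClosedFieldType) (n : nat)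
  (psi : 'cV[C]_(2 ^ n)) (Hpsi : pure_state psi)
  (T : {vspace 'rV['F_2]_(n + n)}) :
  (#|[set a : 'rV['F_2]_(n + n) | a \in T]|%:R)^-1
    * \sum_(a : 'rV['F_2]_(n + n) | a \in T) q_psi psi a
  = \sum_(x : 'rV['F_2]_(n + n) | x \in sperp T) p_psi psi x ^+ 2.
Proof.
have T_neq0 : (#|T|%:R : C) != 0.
  by rewrite pnatr_eq0 -lt0n; apply/card_gt0P; exists 0; rewrite mem0v.
under eq_bigr do rewrite q_psi_fourier.
rewrite cardsE exchange_big /= mulr_sumr [RHS]big_mkcond /=.
apply: eq_bigr => x _; rewrite -mulr_sumr sum_symp_char_vspace.
by case: (x \in sperp T); rewrite ?mul0r ?mulr0 // mul1r mulrCA mulVf ?mulr1.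
Qed.
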